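(* For $n\ge0$ let $\mathcal{G}_n$ be the set of words $w=w_1\cdots w_{2n}$ over $\{0,1\}$ consisting of $n$ zeros and $n$ ones, and let $\mathrm{da}(w)=|\{i\in[n]: w_i\neq w_{2n+1-i}\}|$. Then $$\sum_{n\ge0}\sum_{w\in\mathcal{G}_n} t^{\mathrm{da}(w)}x^n=\frac{1}{\sqrt{1-4tx+4(t^2-1)x^2}}.$$
   Context: $[n]=\{1,2,\dots,n\}$. *)

(* Formal power series in x with coefficients in Z[t]
   represented by their coefficient sequences nat -> {poly int}. *)
From mathcomp Require Import all_boot all_order all_algebra.
Set Implicit Arguments. Unset Strict Implicit. Unset Printing Implicit Defensive.
Import Order.TTheory GRing.Theory Num.Theory.
Local Open Scope ring_scope.

Definition Gset (n : nat) : {set (n.*2).-tuple bool} :=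
  [set w : (n.*2).-tuple bool | count id w == n].

(* da(w) = #{ i in [n] : w_i <> w_{2n+1-i} }, written with 0-based indices:
   position i (0 <= i < n) is compared with position 2n-1-i. *)
Definition da (n : nat) (w : (n.*2).-tuple bool) : nat :=
  #|[set i : 'I_n | nth false w i != nth false w (n.*2 - 1 - i)%N]|.

(* coefficient of x^n of the left-hand side, a polynomial in t = 'X *)
Definition Pcoef (n : nat) : {poly int} :=
  \sum_(w in Gset n) 'X^(da w).

Definition conv (a b : nat -> {poly int}) (n : nat) : {poly int} :=
  \sum_(i < n.+1) a i * b (n - i)%N.

Definition Qcoef (n : nat) : {poly int} :=
  match n with
  | 0 => 1
  | 1 => - 4%:R * 'X
  | 2 => 4%:R * ('X ^+ 2 - 1)
  | _ => 0
  end.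

From mathcomp Require Import all_boot all_order all_algebra.
From mathcomp Require Import zify ring.
Set Implicit Arguments. Unset Strict Implicit. Unset Printing Implicit Defensive.
Import GRing.Theory Num.Theory.
Local Open Scope ring_scope.

(* Pairing letter i with its mirror letter 2n+1-i turns a word of G_n into n
   pairs, a pair weighing t^[its letters differ] y^[its number of ones]; the
   four pair weights add up to 1 + 2ty + y^2, so the coefficient of x^n is the
   central coefficient T_n = [y^n] (1 + 2ty + y^2)^n.
   For Phi = 1 + by + cy^2 the central coefficients obey the Legendre-type
   recurrence (n+1) T_(n+1) = b (2n+1) T_n - n (b^2 - 4c) T_(n-1), which comes
   from comparing coefficients in Phi (Phi^n)' = n Phi' Phi^n.  For
   A = sum T_n x^n and Q = 1 - 2bx + (b^2 - 4c) x^2 the recurrence says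
   2 A' Q + A Q' = 0, hence (A^2 Q)' = A (2 A' Q + A Q') = 0 and A^2 Q = 1 in
   characteristic 0.  We work with the truncations of A, for which all these
   identities hold up to the truncation degree. *)

Lemma coef_derivMXn (R : comNzRingType) (p : {poly R}) k n :
  (p^`() * 'X^(k.+1))`_n = (n%:R - k%:R) * (p * 'X^k)`_n.
Proof.
rewrite !coefMXn ltnS; case: (ltngtP n k) => [_ | ltkn | ->].
- by rewrite mulr0.
- by rewrite coef_deriv -natrB ?(ltnW ltkn) // subnS prednK ?subn_gt0 // mulr_natl.
- by rewrite subrr mul0r.
Qed.

Lemma mulr_deriv_exp (R : comNzRingType) (p : {poly R}) n :
  p * (p ^+ n)^`() = p^`() * p ^+ n *+ n.
Proof.
case: n => [|n]; first by rewrite expr0 derivC mulr0 mulr0n.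
by rewrite deriv_exp exprS /=; ring.
Qed.

Lemma eq_lincomb (R : comPzRingType) (k u v x y : R) :
  u = v -> x - y = k * (u - v) -> x = y.
Proof. by move=> -> xy; apply/subr0_eq; rewrite xy subrr mulr0. Qed.

Section CentralTrinomial.
Variables (R : comNzRingType) (b c : R).

Definition trinomial : {poly R} := 1 + b%:P * 'X + c%:P * 'X^2.
Definition central_trinomial n : R := (trinomial ^+ n)`_n.
Definition central_series N : {poly R} := \poly_(i < N.+1) central_trinomial i.
Definition central_radicand : {poly R} :=
  1 - (b *+ 2)%:P * 'X + (b ^+ 2 - 4%:R * c)%:P * 'X^2.

Local Notation T := central_trinomial.
(* The coefficient of y^(n-1) in Phi^n, read as 0 for n = 0. *)
Let U n : R := (trinomial ^+ n * 'X)`_n.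

Lemma central_trinomial0 : T 0 = 1.
Proof. by rewrite /T expr0 coef1. Qed.

Lemma deriv_trinomial : trinomial^`() = b%:P + (c *+ 2)%:P * 'X.
Proof. by rewrite /trinomial !derivE /= polyCMn; ring. Qed.

Lemma central_trinomialS n :
  n.+1%:R * T n.+1 = n.+1%:R * (b * T n + 2%:R * c * U n).
Proof.
have coef_n : (trinomial ^+ n.+1)^`()`_n = (trinomial^`() * trinomial ^+ n *+ n.+1)`_n.
  by rewrite deriv_exp.
have expand : trinomial^`() * trinomial ^+ n
    = b%:P * trinomial ^+ n + (c *+ 2)%:P * (trinomial ^+ n * 'X).
  by rewrite deriv_trinomial; ring.
move: coef_n; rewrite expand coef_deriv coefMn coefD !coefCM.
by rewrite /T /U !mulr_natl => ->; ring.
Qed.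

Lemma subcentral_trinomialS n :
  n.+2%:R * U n.+1 = n.+1%:R * (2%:R * T n + b * U n).
Proof.
pose P := trinomial ^+ n; pose V : R := (P * 'X^2)`_n.
have shift : U n.+1 = T n + b * U n + c * V.
  rewrite /U; have -> : trinomial ^+ n.+1 * 'X
      = P * 'X + b%:P * (P * 'X * 'X) + c%:P * (P * 'X^2 * 'X).
    by rewrite exprS /trinomial -/P; ring.
  by rewrite !coefD !coefCM !coefMX.
(* the coefficient of y^n in y Phi P' = n y Phi' P *)
have ode : n%:R * T n + b * ((n%:R - 1) * U n) + c * ((n%:R - 2%:R) * V)
    = (b * U n + c *+ 2 * V) *+ n.
  have coef_n : (trinomial * P^`() * 'X)`_n = (trinomial^`() * P *+ n * 'X)`_n.
    by rewrite mulr_deriv_exp.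
  have lhs : trinomial * P^`() * 'X
      = P^`() * 'X^1 + b%:P * (P^`() * 'X^2) + c%:P * (P^`() * 'X^3).
    by rewrite /trinomial; ring.
  have rhs : trinomial^`() * P *+ n * 'X
      = (b%:P * (P * 'X) + (c *+ 2)%:P * (P * 'X^2)) *+ n.
    by rewrite deriv_trinomial; ring.
  move: coef_n; rewrite lhs rhs coefMn !coefD !coefCM !coef_derivMXn.
  by rewrite expr0 mulr1 expr1 subr0.
by apply: (eq_lincomb (k := -1) ode); ring: shift.
Qed.

Lemma central_trinomial_rec n :
  n.+1%:R * T n.+1 = b * (2 * n + 1)%:R * T n - n%:R * (b ^+ 2 - 4%:R * c) * T n.-1.
Proof.
case: n => [|n].
  have := central_trinomialS 0; rewrite /U expr0 mul1r coefX /= central_trinomial0.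
  by move=> ->; ring.
rewrite central_trinomialS mulrDr [_ * (_ * U n.+1)]mulrCA subcentral_trinomialS.
by apply: (eq_lincomb (k := - b) (central_trinomialS n)); ring.
Qed.

Lemma coef0_central_radicand : central_radicand`_0 = 1.
Proof.
by rewrite /central_radicand !coefD coefN !coefCM coefX coefXn coefC !mulr0 subr0 addr0.
Qed.

Lemma deriv_central_radicand :
  central_radicand^`() = - (b *+ 2)%:P + ((b ^+ 2 - 4%:R * c) *+ 2)%:P * 'X.
Proof. by rewrite /central_radicand !derivE /= !polyCMn; ring. Qed.

End CentralTrinomial.

Section InverseSqrtSeries.
Variables (R : idomainType) (b c : R).
Hypothesis R_char0 : has_pchar0 R.
Variable N : nat.

Local Notation T := (central_trinomial b c).
Local Notation A := (central_series b c N).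
Local Notation Q := (central_radicand b c).

Let coefA i : (i <= N)%N -> A`_i = T i.
Proof. by move=> leiN; rewrite coef_poly ltnS leiN. Qed.

Lemma coef_central_series_ode j : (j < N)%N -> (A^`() * Q *+ 2 + A * Q^`())`_j = 0.
Proof.
move=> ltjN.
have expand : A^`() * Q *+ 2 + A * Q^`() = A^`() *+ 2
    - (b *+ 4)%:P * (A^`() * 'X^1) + ((b ^+ 2 - 4%:R * c) *+ 2)%:P * (A^`() * 'X^2)
    - (b *+ 2)%:P * A + ((b ^+ 2 - 4%:R * c) *+ 2)%:P * (A * 'X).
  by rewrite deriv_central_radicand /central_radicand !polyCMn; ring.
have shiftA : j%:R * (A * 'X)`_j = j%:R * T j.-1.
  case: j ltjN => [|j] ltjN; first by rewrite mulr0n !mul0r.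
  by rewrite coefMX coefA //; lia.
rewrite expand !coefD !coefN !coefCM coef_deriv !coef_derivMXn expr0 mulr1 expr1.
rewrite !coefA ?(ltnW ltjN) //.
by apply: (eq_lincomb (k := 2%:R) (central_trinomial_rec b c j)); ring: shiftA.
Qed.

Lemma coef_sqr_central_series_radicand n :
  (n <= N)%N -> (A * A * Q)`_n = (n == 0)%:R.
Proof.
case: n => [_ | n ltnN].
  by rewrite !coef0M coefA // central_trinomial0 coef0_central_radicand !mulr1.
have deriv_AAQ : (A * A * Q)^`() = A * (A^`() * Q *+ 2 + A * Q^`()).
  by rewrite !derivM; ring.
have /eqP : (A * A * Q)`_n.+1 * n.+1%:R = 0.
  rewrite mulr_natr -coef_deriv deriv_AAQ coefM big1 // => i _.
  by rewrite coef_central_series_ode ?mulr0 //; lia.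
by rewrite mulf_eq0 (pcharf0P _).1 // orbF => /eqP ->.
Qed.

End InverseSqrtSeries.

Definition mirror_pairs n (w : (n.*2).-tuple bool) : {ffun 'I_n -> bool * bool} :=
  [ffun i : 'I_n => (nth false w i, nth false w (n.*2 - 1 - i))].

Lemma mirror_pairs_inj n : injective (@mirror_pairs n).
Proof.
move=> w1 w2 eq_w; apply: val_inj; apply: (@eq_from_nth _ false); first by rewrite !size_tuple.
move=> k; rewrite size_tuple => ltk2n.
case: (ltnP k n) => [ltkn | lenk].
  by have := congr1 (fun f : {ffun _ -> _} => (f (Ordinal ltkn)).1) eq_w; rewrite !ffunE.
have ltin : (n.*2 - 1 - k < n)%N by lia.
have := congr1 (fun f : {ffun _ -> _} => (f (Ordinal ltin)).2) eq_w; rewrite !ffunE /=.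
by have -> : (n.*2 - 1 - (n.*2 - 1 - k) = k)%N by lia.
Qed.

Lemma mirror_pairs_bij n : bijective (@mirror_pairs n).
Proof.
apply: inj_card_bij; first exact: mirror_pairs_inj.
by rewrite card_ffun card_prod card_bool card_ord card_tuple card_bool -mul2n expnM.
Qed.

Lemma da_mirror_pairs n (w : (n.*2).-tuple bool) :
  da w = (\sum_(i < n) ((mirror_pairs w i).1 != (mirror_pairs w i).2))%N.
Proof.
rewrite /da cardsE -sum1_card big_mkcond /=; apply: eq_bigr => i _.
by rewrite unfold_in ffunE; case: (_ != _).
Qed.

Lemma count_mirror_pairs n (w : (n.*2).-tuple bool) :
  count id w = (\sum_(i < n) ((mirror_pairs w i).1 + (mirror_pairs w i).2))%N.
Proof.
rewrite -sum1_count (big_nth false) size_tuple big_mkcond /=.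
rewrite (big_cat_nat _ (n := n)) /=; [|lia|lia].
rewrite big_split /= big_mkord; congr (_ + _)%N.
  by apply: eq_bigr => i _; rewrite ffunE; case: (nth _ _ _).
rewrite big_nat_rev /= -{1}(add0n n) big_addn big_mkord.
have -> : (n.*2 - n = n)%N by lia.
apply: eq_bigr => i _; rewrite ffunE /=.
have -> : (n + n.*2 - (i + n).+1 = n.*2 - 1 - i)%N by lia.
by case: (nth _ _ _).
Qed.

Definition pair_weight (p : bool * bool) : {poly {poly int}} :=
  ('X^(p.1 != p.2))%:P * 'X^(p.1 + p.2).

Lemma sum_pair_weight : \sum_p pair_weight p = trinomial ('X *+ 2 : {poly int}) 1.
Proof.
rewrite -(pair_bigA _ (fun x y => pair_weight (x, y))) /= !big_bool /pair_weight /=.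
by rewrite /trinomial !expr0 !expr1 polyCMn; ring.
Qed.

Lemma sum_words_da_count n :
  \sum_(w : (n.*2).-tuple bool) ('X^(da w))%:P * 'X^(count id w)
  = trinomial ('X *+ 2 : {poly int}) 1 ^+ n.
Proof.
rewrite -sum_pair_weight -[n in RHS]card_ord -prodr_const bigA_distr_bigA /=.
rewrite (reindex (@mirror_pairs n)) /=; last exact: onW_bij (mirror_pairs_bij n).
apply: eq_bigr => w _.
by rewrite big_split /= -rmorph_prod /= !prodrXr da_mirror_pairs count_mirror_pairs.
Qed.

Lemma Pcoef_central_trinomial n : Pcoef n = central_trinomial ('X *+ 2 : {poly int}) 1 n.
Proof.
rewrite /central_trinomial -sum_words_da_count coef_sum /Pcoef /Gset big_mkcond /=.
apply: eq_bigr => w _.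
by rewrite inE coefCM coefXn eq_sym; case: (_ == _); rewrite ?mulr1 ?mulr0.
Qed.

Lemma coef_central_radicand_Qcoef k :
  (central_radicand ('X *+ 2 : {poly int}) 1)`_k = Qcoef k.
Proof.
rewrite /central_radicand !coefD coefN !coefCM coefX coefXn coefC.
by case: k => [|[|[|k]]] /=; rewrite ?mulr0 ?mulr1 ?subr0 ?addr0 ?add0r ?sub0r; ring.
Qed.

Lemma conv_coefM (a b : nat -> {poly int}) (p q : {poly {poly int}}) n :
  (forall i, (i <= n)%N -> p`_i = a i) -> (forall i, (i <= n)%N -> q`_i = b i) ->
  conv a b n = (p * q)`_n.
Proof.
move=> coef_p coef_q; rewrite /conv coefM; apply: eq_bigr => i _.
by rewrite coef_p ?coef_q ?leq_subr // -ltnS.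
Qed.

Theorem theorem3p1 :
  Pcoef 0 = 1 /\
  forall n : nat, conv (conv Pcoef Pcoef) Qcoef n = (n == 0%N)%:R.
Proof.
split; first by rewrite Pcoef_central_trinomial central_trinomial0.
move=> n; pose A := central_series ('X *+ 2 : {poly int}) 1 n.
have coefA i : (i <= n)%N -> A`_i = Pcoef i.
  by move=> lein; rewrite coef_poly ltnS lein Pcoef_central_trinomial.
have char0 : has_pchar0 {poly int} by move=> p; rewrite pchar_poly pchar_num.
rewrite -(coef_sqr_central_series_radicand ('X *+ 2) 1 char0 (leqnn n)).
apply: conv_coefM => [i lein | i _]; last exact: coef_central_radicand_Qcoef.
by apply/esym/conv_coefM => j lej; apply: coefA; lia.
Qed.
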